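(* Let $n\in\mathbb{N}$ be odd (resp. even). Let $f:\mathbb{S}^1\to\mathbb{S}^1$ be a $C^n$, non-decreasing, degree one map with lift $F$. Suppose there is an interval $U=\pi((a,b))$ such that $F^{(m)}(x)=0$ for all $x\in(a,b)$ and all $m\ge1$. Then for every $\epsilon\in(0,\tfrac14)$ and every $\delta\in(0,1)$ there exists a $C^n$, non-decreasing, degree one map $\tilde f:\mathbb{S}^1\to\mathbb{S}^1$ with lift $\tilde F$ such that: (1) $\|\tilde F-F\|_{C^n}<\delta$; (2) $\rho(\tilde f)=\rho(f)$; (3) $|\tilde F^{(1)}(x)-F^{(1)}(x)|<\delta F^{(1)}(x)$ for all $x\notin\big(a-\tfrac14(b-a),\,b+\tfrac14(b-a)\big)$; (4) all derivatives $\tilde F^{(m)}(x)$, $m\ge1$, vanish exactly for $x\in\big(a,a+\tfrac{\epsilon}{2^n}\big)\cup\big(a+\tfrac{2\epsilon}{2^n},b\big)$ (resp., for $n$ even, exactly for $x\in\big(a,b-\tfrac{2\epsilon}{2^n}\big)\cup\big(b-\tfrac{\epsilon}{2^n},b\big)$).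
   Context: $\pi:\mathbb{R}\to\mathbb{S}^1=\mathbb{R}/\mathbb{Z}$ is the projection. $F$ denotes the lift of $f$ with $F(0)\in[0,1)$. $F^{(m)}$ is the $m$-th derivative. $\|F\|_{C^j}=\sup_{x\in\mathbb{R},\,0\le i\le j}|F^{(i)}(x)|$. A degree one map satisfies $F(x+1)=F(x)+1$, and a non-decreasing map has a non-decreasing lift. $\rho$ denotes the rotation number $\lim_{k\to\infty} F^k(x)/k$. It is implicitly assumed that $b-a>2\epsilon/2^n$, so that the intervals in (4) are non-empty. *)

From Stdlib Require Import Reals Lra Lia ZArith.
Open Scope R_scope.

(* D is the family of derivatives of F up to order n, and F is C^n:
   D 0 = F, D (m+1) is the derivative of D m for m < n, D n continuous.
   (Values D m for m > n are irrelevant.) *)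
Definition Cn_with (n : nat) (F : R -> R) (D : nat -> R -> R) : Prop :=
  (forall x, D 0%nat x = F x) /\
  (forall (m : nat) (x : R), (m < n)%nat -> derivable_pt_lim (D m) x (D (S m) x)) /\
  continuity (D n).

Definition degree_one (F : R -> R) : Prop := forall x, F (x + 1) = F x + 1.

Definition nondecreasing (F : R -> R) : Prop := forall x y, x <= y -> F x <= F y.

Definition normalized_lift (F : R -> R) : Prop := 0 <= F 0 < 1.

Definition rotation_number (F : R -> R) (r : R) : Prop :=
  forall x, Un_cv (fun k : nat => Nat.iter k F x / INR k) r.

(* closure, inside (a,b), of the set in item (4) of the lemma *)
Definition flat_set (n : nat) (a b eps x : R) : Prop :=
  if Nat.even n
  then (a < x <= b - 2 * eps / 2 ^ n) \/ (b - eps / 2 ^ n <= x < b)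
  else (a < x <= a + eps / 2 ^ n) \/ (a + 2 * eps / 2 ^ n <= x < b).

(* The flat interval of [F] is reshaped by adding [lam * (Sg - Sc)], where [Sg] and [Sc] are
   degree one [C^n] staircases (normalised primitives of periodic bumps): [Sg'] is positive exactly
   on the gap [(p,q)] of the prescribed flat set, while [Sc'] lives where [F'] exceeds a level [kap],
   so that [lam * Sc' < delta * kap] keeps the map nondecreasing and [F'] relatively unchanged.
   As [Sg - Sc] is periodic, a small [lam] makes the perturbation [C^n]-small. A final translation
   by [|t| <= lam * M] restores the rotation number: [t |-> rho (G + t)] is nondecreasing and, since
   lying strictly below or above a rational [p/q] is an open condition on the lift, it has the
   intermediate value property. *)

From Stdlib Require Import Reals Lra Lia ZArith Classical FunctionalExtensionality.
From Coquelicot Require Import Coquelicot.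
Open Scope R_scope.

(** * Elementary real analysis *)

Lemma continuity_pt_eps f x0 : continuity_pt f x0 -> forall eps, eps > 0 ->
  exists d, d > 0 /\ forall x, Rabs (x - x0) < d -> Rabs (f x - f x0) < eps.
Proof.
  intros H eps He. destruct (H eps He) as [d [Hd Hx]].
  exists d; split; auto. intros x Hx'.
  destruct (Req_dec x x0) as [->|Hne].
  - rewrite Rminus_diag, Rabs_R0; lra.
  - apply (Hx x). split; [split; [exact I|auto]|]. exact Hx'.
Qed.

Lemma derivable_pt_lim_locally f g y l d : d > 0 ->
  (forall z, Rabs (z - y) < d -> f z = g z) ->
  derivable_pt_lim g y l -> derivable_pt_lim f y l.
Proof.
  intros Hd Heq Hg eps He. destruct (Hg eps He) as [del Hdel].
  assert (Hm : 0 < Rmin del d) by (apply Rmin_pos; [apply cond_pos|lra]).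
  exists (mkposreal _ Hm). intros h Hh Hhd. simpl in Hhd.
  rewrite (Heq (y + h)), (Heq y).
  - apply Hdel; auto. eapply Rlt_le_trans; [exact Hhd|apply Rmin_l].
  - rewrite Rminus_diag, Rabs_R0; lra.
  - replace (y + h - y) with h by ring. eapply Rlt_le_trans; [exact Hhd|apply Rmin_r].
Qed.

Lemma continuity_pt_locally f g y d : d > 0 ->
  (forall z, Rabs (z - y) < d -> f z = g z) ->
  continuity_pt g y -> continuity_pt f y.
Proof.
  intros Hd Heq Hg eps He. destruct (continuity_pt_eps g y Hg eps He) as [del [Hdel Hx]].
  exists (Rmin del d). split; [apply Rmin_pos; lra|].
  intros x [_ Hx']. simpl in *. unfold R_dist in *.
  assert (Rabs (x - y) < d) by (eapply Rlt_le_trans; [exact Hx'|apply Rmin_r]).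
  rewrite (Heq x), (Heq y); auto.
  - apply Hx. eapply Rlt_le_trans; [exact Hx'|apply Rmin_l].
  - rewrite Rminus_diag, Rabs_R0; lra.
Qed.

Lemma derivable_pt_lim_locally_const f y c d : d > 0 ->
  (forall z, Rabs (z - y) < d -> f z = c) -> derivable_pt_lim f y 0.
Proof.
  intros Hd H. apply (derivable_pt_lim_locally f (fun _ => c) y 0 d Hd H).
  apply derivable_pt_lim_const.
Qed.

Lemma continuity_pt_zero_of_zero_left (D : R -> R) u p : u < p -> continuity_pt D p ->
  (forall x, u < x < p -> D x = 0) -> D p = 0.
Proof.
  intros Hup Hc Hz. apply NNPP. intro Hne.
  destruct (continuity_pt_eps D p Hc (Rabs (D p))) as [d [Hd Hx]]; [apply Rabs_pos_lt; auto|].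
  pose proof (Rmin_l d (p - u)). pose proof (Rmin_r d (p - u)).
  assert (0 < Rmin d (p - u)) by (apply Rmin_pos; lra).
  set (x := p - Rmin d (p - u) / 2).
  specialize (Hx x). rewrite (Hz x), Rminus_0_l, Rabs_Ropp in Hx by (unfold x; lra).
  enough (Rabs (D p) < Rabs (D p)) by lra. apply Hx. unfold x. rewrite Rabs_left; lra.
Qed.

Lemma continuity_pt_zero_of_zero_right (D : R -> R) q v : q < v -> continuity_pt D q ->
  (forall x, q < x < v -> D x = 0) -> D q = 0.
Proof.
  intros Hqv Hc Hz.
  rewrite <- (Ropp_involutive q).
  apply (continuity_pt_zero_of_zero_left (fun x => D (- x)) (- v) (- q)); [lra| |].
  - apply (continuity_pt_comp Ropp D); [apply continuity_pt_opp, continuity_pt_id|].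
    rewrite !Ropp_involutive; exact Hc.
  - intros x Hx. apply Hz. lra.
Qed.

Lemma nondecreasing_of_derive_nonneg f f' : (forall x, derivable_pt_lim f x (f' x)) ->
  (forall x, 0 <= f' x) -> nondecreasing f.
Proof.
  intros Hd Hp x y Hxy. destruct (Req_dec x y) as [->|Hne]; [lra|].
  destruct (MVT_cor2 f f' x y) as [c [Hc _]]; [lra|intros; auto|].
  assert (0 <= f' c * (y - x)) by (apply Rmult_le_pos; auto; lra). lra.
Qed.

Lemma const_of_derive_zero f f' u v : (forall x, derivable_pt_lim f x (f' x)) ->
  (forall x, u < x < v -> f' x = 0) -> forall x, u <= x <= v -> f x = f u.
Proof.
  intros Hd Hz x Hx. destruct (Req_dec x u) as [->|Hne]; auto.
  destruct (MVT_cor2 f f' u x) as [c [Hc Hc2]]; [lra|intros; auto|].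
  rewrite Hz in Hc; lra.
Qed.

Lemma derive_nonneg_of_nondecreasing f f' : (forall x, derivable_pt_lim f x (f' x)) ->
  nondecreasing f -> forall x, 0 <= f' x.
Proof.
  intros Hd Hn x.
  assert (pr : derivable f) by (intro y; exists (f' y); apply Hd).
  rewrite <- (derive_pt_eq_0 f x (f' x) (pr x) (Hd x)).
  apply nonneg_derivative_0. exact Hn.
Qed.

Lemma shift_INR (G : R -> R) c : (forall x, G (x + 1) = G x + c) ->
  forall (k : nat) x, G (x + INR k) = G x + INR k * c.
Proof.
  intros H k. induction k as [|k IH]; intro x.
  - simpl. rewrite Rplus_0_r; ring.
  - rewrite S_INR. replace (x + (INR k + 1)) with ((x + INR k) + 1) by ring.
    rewrite H, IH. ring.
Qed.

Lemma shift_IZR (G : R -> R) c : (forall x, G (x + 1) = G x + c) ->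
  forall (k : Z) x, G (x + IZR k) = G x + IZR k * c.
Proof.
  intros H k x. destruct k as [|p|p].
  - simpl. rewrite Rplus_0_r; ring.
  - rewrite <- positive_nat_Z, <- INR_IZR_INZ. apply shift_INR; auto.
  - rewrite <- Pos2Z.opp_pos, opp_IZR, <- positive_nat_Z, <- INR_IZR_INZ.
    pose proof (shift_INR G c H (Pos.to_nat p) (x - INR (Pos.to_nat p))) as E.
    replace (x - INR (Pos.to_nat p) + INR (Pos.to_nat p)) with x in E by ring.
    replace (x + - INR (Pos.to_nat p)) with (x - INR (Pos.to_nat p)) by ring. lra.
Qed.

Lemma degree_one_IZR (G : R -> R) : degree_one G ->
  forall (k : Z) x, G (x + IZR k) = G x + IZR k.
Proof. intros H k x. rewrite (shift_IZR G 1 H k x). ring. Qed.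

Lemma periodic_IZR (G : R -> R) : (forall x, G (x + 1) = G x) ->
  forall (k : Z) x, G (x + IZR k) = G x.
Proof. intros H k x. rewrite (shift_IZR G 0); [ring|]. intro y; rewrite H; ring. Qed.

Lemma exists_IZR_shift x y : exists k : Z, x <= y + IZR k <= x + 1.
Proof. destruct (archimed (x - y)) as [H1 H2]. exists (up (x - y)). lra. Qed.

Lemma periodic_bounded (D : R -> R) : continuity D -> (forall x, D (x + 1) = D x) ->
  exists M, 0 < M /\ forall x, Rabs (D x) <= M.
Proof.
  intros Hc Hp.
  destruct (continuity_ab_maj (fun x => Rabs (D x)) 0 1) as [xm [Hm _]]; [lra| |].
  { intros c _. apply (continuity_pt_comp D Rabs); [apply Hc|apply Rcontinuity_abs]. }
  exists (Rabs (D xm) + 1). split; [pose proof (Rabs_pos (D xm)); lra|].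
  intro x. destruct (exists_IZR_shift 0 x) as [k Hk].
  rewrite <- (periodic_IZR D Hp k x).
  destruct (Req_dec (x + IZR k) 1) as [E|E].
  - rewrite E, <- (Rplus_0_l 1), Hp. specialize (Hm 0). simpl in Hm. lra.
  - specialize (Hm (x + IZR k)). simpl in Hm. assert (Rabs (D (x + IZR k)) <= Rabs (D xm)) by (apply Hm; lra). lra.
Qed.

Lemma uniform_bound_finite (f : nat -> R -> R) K :
  (forall i, (i <= K)%nat -> exists M, 0 < M /\ forall x, Rabs (f i x) <= M) ->
  exists M, 0 < M /\ forall i x, (i <= K)%nat -> Rabs (f i x) <= M.
Proof.
  induction K as [|K IH]; intro H.
  - destruct (H 0%nat (le_n 0)) as [M [HM HMx]]. exists M. split; auto.
    intros i x Hi. replace i with 0%nat by lia. auto.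
  - destruct IH as [M1 [HM1 HMx1]]; [intros i Hi; apply H; lia|].
    destruct (H (S K) (le_n _)) as [M2 [HM2 HMx2]].
    exists (Rmax M1 M2). split; [eapply Rlt_le_trans; [exact HM1|apply Rmax_l]|].
    intros i x Hi. destruct (Nat.eq_dec i (S K)) as [->|Hne].
    + eapply Rle_trans; [apply HMx2|apply Rmax_r].
    + eapply Rle_trans; [apply HMx1; lia|apply Rmax_l].
Qed.

(** * Functions of class C^k *)

Definition Ck (k : nat) (f : R -> R) := exists D, Cn_with k f D.

Lemma Cn_with_D0 k f D : Cn_with k f D -> D 0%nat = f.
Proof. intros [H _]. apply functional_extensionality; auto. Qed.

Lemma Cn_with_continuity k f D : Cn_with k f D -> forall m, (m <= k)%nat -> continuity (D m).
Proof.
  intros [H0 [H1 H2]] m Hm x. destruct (Nat.eq_dec m k) as [->|Hne]; [apply H2|].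
  apply derivable_continuous_pt. exists (D (S m) x). apply H1. lia.
Qed.

Lemma Cn_with_derive1 k f D : Cn_with (S k) f D -> forall x, derivable_pt_lim f x (D 1%nat x).
Proof.
  intros HD x. rewrite <- (Cn_with_D0 _ _ _ HD). destruct HD as [_ [H1 _]]. apply H1. lia.
Qed.

Lemma Ck_continuity k f : Ck k f -> continuity f.
Proof.
  intros [D HD]. rewrite <- (Cn_with_D0 _ _ _ HD). apply (Cn_with_continuity _ _ _ HD). lia.
Qed.

Lemma Ck0 f : continuity f -> Ck 0 f.
Proof. intro H. exists (fun _ => f). repeat split; auto. intros; lia. Qed.

Lemma CkS f f' k : (forall x, derivable_pt_lim f x (f' x)) -> Ck k f' -> Ck (S k) f.
Proof.
  intros Hd [D [H0 [H1 H2]]].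
  exists (fun m => match m with O => f | S m' => D m' end).
  repeat split; auto. intros [|m] x Hm.
  - rewrite H0. auto.
  - apply H1. lia.
Qed.

Lemma CkS_inv k f : Ck (S k) f ->
  exists f', (forall x, derivable_pt_lim f x (f' x)) /\ Ck k f'.
Proof.
  intros [D HD]. exists (D 1%nat). split; [apply (Cn_with_derive1 k), HD|].
  destruct HD as [H0 [H1 H2]].
  exists (fun m => D (S m)). repeat split; auto. intros m x Hm. apply H1. lia.
Qed.

Lemma CkS_Ck k f : Ck (S k) f -> Ck k f.
Proof.
  intros [D HD]. exists D. split; [apply HD|split].
  - intros m x Hm. apply HD. lia.
  - apply (Cn_with_continuity _ _ _ HD). lia.
Qed.

Lemma Ck_const k c : Ck k (fun _ => c).
Proof.
  revert c. induction k as [|k IH]; intro c.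
  - apply Ck0. intro x. apply continuity_pt_const. intros ? ?; reflexivity.
  - apply (CkS _ (fun _ => 0)); [intro; apply derivable_pt_lim_const|apply IH].
Qed.

Lemma Ck_plus k f g : Ck k f -> Ck k g -> Ck k (fun x => f x + g x).
Proof.
  revert f g. induction k as [|k IH]; intros f g Hf Hg.
  - apply Ck0. intro x. apply continuity_pt_plus; apply Ck_continuity with 0%nat; auto.
  - destruct (CkS_inv _ _ Hf) as [f' [Hf1 Hf2]].
    destruct (CkS_inv _ _ Hg) as [g' [Hg1 Hg2]].
    apply (CkS _ (fun x => f' x + g' x)); [|apply IH; auto].
    intro x. exact (derivable_pt_lim_plus f g x _ _ (Hf1 x) (Hg1 x)).
Qed.

Lemma Ck_mult k f g : Ck k f -> Ck k g -> Ck k (fun x => f x * g x).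
Proof.
  revert f g. induction k as [|k IH]; intros f g Hf Hg.
  - apply Ck0. intro x. apply continuity_pt_mult; apply Ck_continuity with 0%nat; auto.
  - destruct (CkS_inv _ _ Hf) as [f' [Hf1 Hf2]].
    destruct (CkS_inv _ _ Hg) as [g' [Hg1 Hg2]].
    apply (CkS _ (fun x => f' x * g x + f x * g' x)).
    + intro x. exact (derivable_pt_lim_mult f g x _ _ (Hf1 x) (Hg1 x)).
    + apply Ck_plus; apply IH; auto; apply CkS_Ck; auto.
Qed.

Lemma Ck_scal k c f : Ck k f -> Ck k (fun x => c * f x).
Proof. intro H. apply (Ck_mult k (fun _ => c) f); auto. apply Ck_const. Qed.

Definition smooth_with (u : R -> R) (Du : nat -> R -> R) :=
  (forall x, Du 0%nat x = u x) /\ forall m x, derivable_pt_lim (Du m) x (Du (S m) x).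

Lemma smooth_with_Ck u Du : smooth_with u Du -> forall k, Ck k u.
Proof.
  intros [H0 H1] k. exists Du. split; [auto|split]; [intros m x _; apply H1|].
  intro x. apply derivable_continuous_pt. exists (Du (S k) x). apply H1.
Qed.

Lemma Ck_comp_smooth k T u Du : Ck k T -> smooth_with u Du -> Ck k (fun x => T (u x)).
Proof.
  revert T u Du. induction k as [|k IH]; intros T u Du HT Hu.
  - apply Ck0. intro x. apply (continuity_pt_comp u T).
    + apply (Ck_continuity 0), (smooth_with_Ck u Du Hu).
    + apply (Ck_continuity 0 T HT).
  - destruct (CkS_inv _ _ HT) as [T' [HT1 HT2]].
    apply (CkS _ (fun x => T' (u x) * Du 1%nat x)).
    + intro x. destruct Hu as [H0 H1].
      assert (Eu : Du 0%nat = u) by (apply functional_extensionality; auto).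
      assert (Hd : derivable_pt_lim u x (Du 1%nat x)) by (rewrite <- Eu; apply H1).
      exact (derivable_pt_lim_comp u T x _ _ Hd (HT1 (u x))).
    + apply Ck_mult; [apply (IH T' u Du HT2 Hu)|].
      destruct Hu as [_ H1]. apply (smooth_with_Ck _ (fun m => Du (S m))). split; auto.
Qed.

Lemma Cn_with_unique k f D D' : Cn_with k f D -> Cn_with k f D' ->
  forall m x, (m <= k)%nat -> D m x = D' m x.
Proof.
  intros [H0 [H1 _]] [H0' [H1' _]] m. induction m as [|m IH]; intros x Hm.
  - rewrite H0, H0'; auto.
  - assert (E : D m = D' m) by (apply functional_extensionality; intro; apply IH; lia).
    apply (uniqueness_limite (D m) x); [apply H1; lia|]. rewrite E. apply H1'; lia.
Qed.

Lemma Cn_with_zero_on_interval k f D u v : Cn_with k f D ->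
  (forall x, u < x < v -> D 1%nat x = 0) ->
  forall m x, (1 <= m <= k)%nat -> u < x < v -> D m x = 0.
Proof.
  intros [H0 [H1 _]] Hz m. induction m as [|m IH]; intros x Hm Hx; [lia|].
  destruct m as [|m]; [apply Hz; auto|].
  apply (uniqueness_limite (D (S m)) x); [apply H1; lia|].
  apply (derivable_pt_lim_locally_const _ x 0 (Rmin (x - u) (v - x))); [apply Rmin_pos; lra|].
  intros z Hz'. apply IH; [lia|]. pose proof (Rmin_l (x - u) (v - x)).
  pose proof (Rmin_r (x - u) (v - x)). apply Rabs_def2 in Hz'. lra.
Qed.

Lemma derivable_pt_lim_shift1 g y l :
  derivable_pt_lim g (y + 1) l -> derivable_pt_lim (fun y => g (y + 1)) y l.
Proof.
  intro H. replace l with (l * 1) by ring.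
  apply (derivable_pt_lim_comp (fun y => y + 1) g); [|exact H].
  replace 1 with (1 + 0) at 1 by ring.
  apply derivable_pt_lim_plus; [apply derivable_pt_lim_id|apply derivable_pt_lim_const].
Qed.

(* Shifting [f] by one period and subtracting [c] gives a second derivative family of [f]. *)
Lemma Cn_with_periodic k f D c : Cn_with k f D -> (forall x, f (x + 1) = f x + c) ->
  forall m x, (1 <= m <= k)%nat -> D m (x + 1) = D m x.
Proof.
  intros HD Hp m x Hm.
  set (D' := fun j y => D j (y + 1) - (if Nat.eqb j 0 then c else 0)).
  assert (HD' : Cn_with k f D').
  { destruct HD as [H0 [H1 H2]]. split; [|split].
    - intro y. unfold D'. simpl. rewrite H0, Hp. ring.
    - intros j y Hj. unfold D'. simpl. rewrite Rminus_0_r.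
      replace (D (S j) (y + 1)) with (D (S j) (y + 1) - 0) by ring.
      apply derivable_pt_lim_minus; [|apply derivable_pt_lim_const].
      apply derivable_pt_lim_shift1. apply H1; lia.
    - intro y. unfold D'. apply continuity_pt_minus.
      + apply (continuity_pt_comp (fun y => y + 1) (D k)); [|apply H2].
        apply continuity_pt_plus; [apply continuity_pt_id|apply continuity_pt_const; intros ? ?; reflexivity].
      + apply continuity_pt_const; intros ? ?; reflexivity. }
  pose proof (Cn_with_unique k f D D' HD HD' m x ltac:(lia)) as E.
  unfold D' in E. destruct m; [lia|]. simpl in E. lra.
Qed.

Lemma Cn_with_periodic_bounded k f D : Cn_with k f D -> (forall x, f (x + 1) = f x) ->
  exists M, 0 < M /\ forall i x, (i <= k)%nat -> Rabs (D i x) <= M.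
Proof.
  intros HD Hp. apply uniform_bound_finite. intros i Hi.
  apply periodic_bounded; [apply (Cn_with_continuity _ _ _ HD i Hi)|].
  intro x. destruct i as [|i].
  - rewrite (Cn_with_D0 _ _ _ HD). apply Hp.
  - apply (Cn_with_periodic k f D 0); [exact HD| |lia]. intro y; rewrite Hp; ring.
Qed.

Lemma Cn_with_lincomb k f g Df Dg l : Cn_with k f Df -> Cn_with k g Dg ->
  Cn_with k (fun x => f x + l * g x) (fun m x => Df m x + l * Dg m x).
Proof.
  intros [A0 [A1 A2]] [B0 [B1 B2]]. split; [|split].
  - intro x. rewrite A0, B0. ring.
  - intros m x Hm. apply derivable_pt_lim_plus; [apply A1; auto|].
    apply (derivable_pt_lim_scal (Dg m)). apply B1; auto.
  - intro x. apply continuity_pt_plus; [apply A2|apply continuity_pt_scal, B2].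
Qed.

Lemma Cn_with_add_const k f D t : Cn_with k f D ->
  Cn_with k (fun x => f x + t) (fun m x => D m x + (if Nat.eqb m 0 then t else 0)).
Proof.
  intros [A0 [A1 A2]]. split; [|split].
  - intro x. simpl. rewrite A0. ring.
  - intros m x Hm. simpl. rewrite Rplus_0_r.
    replace (D (S m) x) with (D (S m) x + 0) by ring.
    apply derivable_pt_lim_plus; [apply A1; auto|apply derivable_pt_lim_const].
  - intro x. apply continuity_pt_plus; [apply A2|apply continuity_pt_const; intros ? ?; reflexivity].
Qed.

(** * Periodic bumps and staircases *)

Definition pos_pow (N : nat) (y : R) : R := if Rle_dec y 0 then 0 else y ^ N.

Lemma pos_pow_abs_le N y : Rabs (pos_pow N y) <= Rabs y ^ N.
Proof.
  unfold pos_pow. destruct (Rle_dec y 0).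
  - rewrite Rabs_R0. apply pow_le, Rabs_pos.
  - rewrite <- RPow_abs. lra.
Qed.

Lemma pos_pow_nonneg N y : 0 <= pos_pow N y.
Proof. unfold pos_pow. destruct (Rle_dec y 0); [lra|]. apply pow_le; lra. Qed.

Lemma pos_pow_pos N y : 0 < y -> 0 < pos_pow N y.
Proof. intro H. unfold pos_pow. destruct (Rle_dec y 0); [lra|]. apply pow_lt; lra. Qed.

Lemma pos_pow_nonpos N y : y <= 0 -> pos_pow N y = 0.
Proof. intro H. unfold pos_pow. destruct (Rle_dec y 0); [lra|tauto]. Qed.

Lemma continuity_pos_pow1 : continuity (pos_pow 1).
Proof.
  intro y. destruct (Rtotal_order y 0) as [Hy|[Hy|Hy]].
  - apply (continuity_pt_locally _ (fun _ => 0) y (- y)); [lra| |].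
    + intros z Hz. apply Rabs_def2 in Hz. apply pos_pow_nonpos. lra.
    + apply continuity_pt_const. intros ? ?; reflexivity.
  - subst y. intros eps He. exists eps. split; auto. intros z [_ Hz].
    simpl in *. unfold R_dist in *. rewrite (pos_pow_nonpos 1 0), !Rminus_0_r in * by lra.
    eapply Rle_lt_trans; [apply pos_pow_abs_le|]. simpl. lra.
  - apply (continuity_pt_locally _ (fun z => z ^ 1) y y); [lra| |].
    + intros z Hz. apply Rabs_def2 in Hz. unfold pos_pow. destruct (Rle_dec z 0); [lra|auto].
    + apply derivable_continuous_pt. exists (INR 1 * y ^ 0). apply derivable_pt_lim_pow.
Qed.

(* At [0] the difference quotient is bounded by [|h| ^ (M+1)], which tends to [0]. *)
Lemma derivable_pt_lim_pos_pow M y :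
  derivable_pt_lim (pos_pow (S (S M))) y (INR (S (S M)) * pos_pow (S M) y).
Proof.
  destruct (Rtotal_order y 0) as [Hy|[Hy|Hy]].
  - rewrite (pos_pow_nonpos _ y), Rmult_0_r by lra.
    apply (derivable_pt_lim_locally_const _ y 0 (- y)); [lra|].
    intros z Hz. apply Rabs_def2 in Hz. apply pos_pow_nonpos. lra.
  - subst y. rewrite (pos_pow_nonpos _ 0), Rmult_0_r by lra.
    intros eps He. assert (Hm : 0 < Rmin 1 eps) by (apply Rmin_pos; lra).
    exists (mkposreal _ Hm). intros h Hh Hhd. simpl in Hhd.
    pose proof (Rmin_l 1 eps). pose proof (Rmin_r 1 eps).
    rewrite Rplus_0_l, (pos_pow_nonpos _ 0), !Rminus_0_r by lra.
    unfold Rdiv. rewrite Rabs_mult, Rabs_inv.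
    pose proof (pos_pow_abs_le (S (S M)) h) as Hb.
    assert (Ha : 0 < Rabs h) by (apply Rabs_pos_lt; auto).
    apply (Rmult_lt_reg_r (Rabs h)); auto.
    rewrite Rmult_assoc, Rinv_l, Rmult_1_r by lra.
    eapply Rle_lt_trans; [exact Hb|]. simpl.
    assert (Rabs h ^ M <= 1) by (rewrite <- (pow1 M); apply pow_incr; split; [apply Rabs_pos|lra]).
    assert (0 <= Rabs h ^ M) by (apply pow_le, Rabs_pos).
    assert (Rabs h * (Rabs h * Rabs h ^ M) <= Rabs h * Rabs h) by (apply Rmult_le_compat_l; nra).
    assert (Rabs h * Rabs h < eps * Rabs h) by (apply Rmult_lt_compat_r; lra).
    lra.
  - apply (derivable_pt_lim_locally _ (fun z => z ^ S (S M)) y _ y); [lra| |].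
    + intros z Hz. apply Rabs_def2 in Hz. unfold pos_pow. destruct (Rle_dec z 0); [lra|auto].
    + unfold pos_pow. destruct (Rle_dec y 0); [lra|]. apply derivable_pt_lim_pow.
Qed.

Lemma Ck_pos_pow N : Ck N (pos_pow (S N)).
Proof.
  induction N as [|N IH].
  - apply Ck0, continuity_pos_pow1.
  - apply (CkS _ (fun y => INR (S (S N)) * pos_pow (S N) y)).
    + intro y. apply derivable_pt_lim_pos_pow.
    + apply Ck_scal, IH.
Qed.

Definition cos_derivs (al be ga : R) (m : nat) (x : R) : R :=
  al ^ m * cos (al * x + be + INR m * (PI / 2)) - (if Nat.eqb m 0 then ga else 0).

Lemma smooth_with_cos al be ga : smooth_with (fun x => cos (al * x + be) - ga) (cos_derivs al be ga).
Proof.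
  split.
  - intro x. unfold cos_derivs. simpl. rewrite Rmult_0_l, Rplus_0_r. ring.
  - intros m x. unfold cos_derivs.
    replace (al ^ S m * cos (al * x + be + INR (S m) * (PI / 2)) - (if (S m =? 0)%nat then ga else 0))
      with (al ^ m * (- sin (al * x + be + INR m * (PI / 2)) * al)).
    + apply is_derive_Reals. auto_derive; auto. ring.
    + rewrite S_INR. cbn [pow Nat.eqb].
      replace (al * x + be + (INR m + 1) * (PI / 2)) with ((al * x + be + INR m * (PI / 2)) + PI / 2) by ring.
      rewrite cos_plus, cos_PI2, sin_PI2. ring.
Qed.

(* [cos (2 pi (x - m)) > cos (pi w)] exactly on the arcs of length [w] around [m + Z]. *)
Definition bump (N : nat) (m w x : R) : R :=
  pos_pow (S N) (cos (2 * PI * x + - (2 * PI * m)) - cos (PI * w)).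

Lemma Ck_bump N m w : Ck N (bump N m w).
Proof. apply (Ck_comp_smooth N _ _ _ (Ck_pos_pow N) (smooth_with_cos _ _ _)). Qed.

Lemma bump_nonneg N m w x : 0 <= bump N m w x.
Proof. apply pos_pow_nonneg. Qed.

Lemma bump_periodic N m w x : bump N m w (x + 1) = bump N m w x.
Proof.
  unfold bump. f_equal. f_equal.
  replace (2 * PI * (x + 1) + - (2 * PI * m)) with ((2 * PI * x + - (2 * PI * m)) + 2 * INR 1 * PI) by (simpl; ring).
  apply cos_period.
Qed.

Lemma cos_2PI_dist x m : cos (2 * PI * x + - (2 * PI * m)) = cos (2 * PI * Rabs (x - m)).
Proof.
  replace (2 * PI * x + - (2 * PI * m)) with (2 * PI * (x - m)) by ring.
  unfold Rabs. destruct (Rcase_abs (x - m)); [|reflexivity].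
  rewrite <- cos_neg. f_equal. ring.
Qed.

Lemma bump_pos_iff N m w x : 0 < w < 1 ->
  0 < bump N m w x <-> exists k : Z, Rabs (x + IZR k - m) < w / 2.
Proof.
  intros Hw. pose proof PI_RGT_0. split.
  - intro Hb. destruct (archimed (x - m - 1/2)) as [H1 H2].
    exists (- up (x - m - 1/2))%Z.
    rewrite <- (periodic_IZR (bump N m w) (bump_periodic N m w) (- up (x - m - 1/2))%Z x) in Hb.
    set (x' := x + IZR (- up (x - m - 1 / 2))) in *.
    assert (Hx' : Rabs (x' - m) <= 1/2) by (unfold x'; rewrite opp_IZR; apply Rabs_le; lra).
    apply Rnot_le_lt. intro Hge. unfold bump in Hb. rewrite cos_2PI_dist in Hb.
    assert (cos (2 * PI * Rabs (x' - m)) <= cos (PI * w)); [|rewrite pos_pow_nonpos in Hb; lra].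
    pose proof (Rabs_pos (x' - m)). apply cos_decr_1; nra.
  - intros [k Hk]. rewrite <- (periodic_IZR _ (bump_periodic N m w) k).
    apply pos_pow_pos. rewrite cos_2PI_dist.
    assert (cos (PI * w) < cos (2 * PI * Rabs (x + IZR k - m))); [|lra].
    pose proof (Rabs_pos (x + IZR k - m)). apply cos_decreasing_1; nra.
Qed.

Lemma no_IZR_strictly_between (n k : Z) : ~ (IZR n < IZR k < IZR n + 1).
Proof.
  intros [H1 H2]. apply lt_IZR in H1. rewrite <- plus_IZR in H2. apply lt_IZR in H2. lia.
Qed.

Lemma derivable_pt_lim_RInt (f : R -> R) : continuity f ->
  forall x, derivable_pt_lim (fun y => RInt f 0 y) x (f x).
Proof.
  intros Hf x. apply is_derive_Reals. apply is_derive_RInt with (a := 0).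
  - apply filter_forall. intro y. apply (RInt_correct (V := R_CompleteNormedModule)).
    apply ex_RInt_continuous. intros; apply continuity_pt_filterlim; auto.
  - apply continuity_pt_filterlim; auto.
Qed.

(* [S] is the primitive of [psi] normalised by the mass [I] of [psi] over a period. *)
Lemma staircase k (psi : R -> R) : Ck k psi -> (forall x, 0 <= psi x) ->
  (forall x, psi (x + 1) = psi x) -> (exists c0, 0 < psi c0) ->
  exists (S : R -> R) (I : R), 0 < I /\ Ck (Datatypes.S k) S /\
    (forall x, derivable_pt_lim S x (psi x / I)) /\ (forall x, S (x + 1) = S x + 1).
Proof.
  intros Hk Hnn Hper [c0 Hc0].
  set (P := fun x => RInt psi 0 x).
  assert (dP : forall x, derivable_pt_lim P x (psi x))
    by (apply derivable_pt_lim_RInt, (Ck_continuity k), Hk).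
  set (I := P 1).
  assert (HPer : forall x, P (x + 1) = P x + I).
  { intro x. set (Q := fun y => P (y + 1) - P y).
    assert (dQ : forall y, derivable_pt_lim Q y 0).
    { intro y. replace 0 with (psi (y + 1) - psi y) by (rewrite Hper; ring).
      apply derivable_pt_lim_minus; [apply derivable_pt_lim_shift1|]; apply dP. }
    assert (EQ : Q x = Q 0).
    { destruct (Rle_dec 0 x).
      - apply (const_of_derive_zero Q (fun _ => 0) 0 x dQ); auto. lra.
      - symmetry. apply (const_of_derive_zero Q (fun _ => 0) x 0 dQ); auto. lra. }
    assert (P0 : P 0 = 0) by (unfold P; rewrite RInt_point; reflexivity).
    unfold Q, I in *. rewrite Rplus_0_l, P0 in EQ. lra. }
  assert (Pinc : nondecreasing P) by apply (nondecreasing_of_derive_nonneg P psi dP Hnn).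
  assert (HI : 0 < I).
  { apply Rnot_le_lt. intro HI.
    assert (Hcst : forall z, Rabs (z - c0) < 1/2 -> P z = P (c0 - 1/2)).
    { intros z Hz. apply Rabs_def2 in Hz.
      pose proof (Pinc (c0 - 1/2) z ltac:(lra)). pose proof (Pinc z (c0 + 1/2) ltac:(lra)).
      pose proof (HPer (c0 - 1/2)) as E. replace (c0 - 1/2 + 1) with (c0 + 1/2) in E by lra. lra. }
    pose proof (derivable_pt_lim_locally_const P c0 _ (1/2) ltac:(lra) Hcst).
    pose proof (uniqueness_limite P c0 _ _ (dP c0) H). lra. }
  assert (dS : forall x, derivable_pt_lim (fun x => P x / I) x (psi x / I)).
  { intro x. unfold Rdiv. apply (derivable_pt_lim_scal_right P), dP. }
  exists (fun x => P x / I), I. split; [auto|split; [|split; [exact dS|]]].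
  - apply (CkS _ _ _ dS). unfold Rdiv. apply (Ck_mult k psi (fun _ => / I)); auto. apply Ck_const.
  - intro x. rewrite HPer. field. lra.
Qed.

Lemma arc_staircase N p q : p < q < p + 1 ->
  exists S DS, Cn_with (Datatypes.S N) S DS /\ (forall x, S (x + 1) = S x + 1) /\
    (forall x, 0 <= DS 1%nat x) /\
    (forall x, 0 < DS 1%nat x <-> exists k : Z, p < x + IZR k < q).
Proof.
  intros Hpq. set (m := (p + q) / 2). set (w := q - p).
  assert (Hw : 0 < w < 1) by (unfold w; lra).
  destruct (staircase N (bump N m w) (Ck_bump N m w) (bump_nonneg N m w) (bump_periodic N m w))
    as [S [I [HI [[DS HS] [dS Sper]]]]].
  { exists m. apply bump_pos_iff; auto. exists 0%Z. unfold m, w.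
    rewrite Rplus_0_r, Rabs_left1; lra. }
  assert (DS1 : forall x, DS 1%nat x = bump N m w x / I).
  { intro x. apply (uniqueness_limite S x); [apply (Cn_with_derive1 N), HS|apply dS]. }
  exists S, DS. split; [exact HS|split; [exact Sper|split]].
  - intro x. rewrite DS1. apply Rdiv_le_0_compat; [apply bump_nonneg|exact HI].
  - intro x. rewrite DS1. split.
    + intro Hpos. assert (0 < bump N m w x).
      { apply (Rmult_lt_reg_r (/ I)); [apply Rinv_0_lt_compat; lra|]. rewrite Rmult_0_l. exact Hpos. }
      destruct (proj1 (bump_pos_iff N m w x Hw) H) as [k Hk].
      exists k. apply Rabs_def2 in Hk. unfold m, w in Hk. lra.
    + intros [k Hk]. apply Rdiv_lt_0_compat; [|exact HI]. apply bump_pos_iff; auto.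
      exists k. apply Rabs_def1; unfold m, w; lra.
Qed.

Lemma Cn_with_zero_off_arc k S DS c p q : p < q < p + 1 -> Cn_with k S DS ->
  (forall x, S (x + 1) = S x + c) ->
  (forall x, DS 1%nat x <> 0 -> exists j : Z, p < x + IZR j < q) ->
  forall m x, (1 <= m <= k)%nat -> (forall j : Z, ~ p < x + IZR j < q) -> DS m x = 0.
Proof.
  intros Hpq HS Hshift Hsupp m x Hm Hx.
  assert (Dper : forall j y, DS m (y + IZR j) = DS m y)
    by (apply periodic_IZR; intro y; apply (Cn_with_periodic k S DS c); auto).
  assert (Hgap : forall y, q < y < p + 1 -> DS 1%nat y = 0).
  { intros y Hy. apply NNPP. intro Hne. destruct (Hsupp y Hne) as [j Hj].
    apply (no_IZR_strictly_between (-1) j). simpl IZR. lra. }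
  assert (Hcont : continuity (DS m)) by (apply (Cn_with_continuity _ _ _ HS); lia).
  assert (Hzero : forall y, q <= y <= p + 1 -> DS m y = 0).
  { intros y Hy.
    assert (Hint : forall z, q < z < p + 1 -> DS m z = 0)
      by (intros; apply (Cn_with_zero_on_interval k S DS q (p + 1)); auto).
    destruct (Req_dec y q) as [->|Hyq]; [apply (continuity_pt_zero_of_zero_right _ q (p + 1)); auto; lra|].
    destruct (Req_dec y (p + 1)) as [->|Hyp]; [apply (continuity_pt_zero_of_zero_left _ q); auto; lra|].
    apply Hint. lra. }
  destruct (exists_IZR_shift q x) as [j Hj].
  destruct (Rle_dec (x + IZR j) (p + 1)) as [Hle|Hgt].
  - rewrite <- (Dper j). apply Hzero. lra.
  - rewrite <- (Dper (j - 1)%Z). rewrite minus_IZR. apply Hzero.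
    destruct (Req_dec (x + IZR j) (q + 1)) as [E|E]; [lra|].
    exfalso. apply (Hx (j - 1)%Z). rewrite minus_IZR. lra.
Qed.

(** * Rotation numbers *)

Lemma iter_degree_one H : degree_one H -> forall k, degree_one (Nat.iter k H).
Proof. intros Hd k. induction k as [|k IH]; intro x; simpl; auto. rewrite IH. apply Hd. Qed.

Lemma iter_nondecreasing H : nondecreasing H -> forall k, nondecreasing (Nat.iter k H).
Proof. intros Hn k. induction k; intros x y Hxy; simpl; auto. Qed.

Lemma iter_displacement_oscillation H : nondecreasing H -> degree_one H -> forall k x y,
  Rabs ((Nat.iter k H x - x) - (Nat.iter k H y - y)) <= 1.
Proof.
  intros Hn Hd k x y. destruct (exists_IZR_shift x y) as [j Hj].
  pose proof (degree_one_IZR _ (iter_degree_one H Hd k) j y).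
  pose proof (iter_nondecreasing H Hn k x (y + IZR j) ltac:(lra)).
  pose proof (iter_nondecreasing H Hn k (y + IZR j) (x + 1) ltac:(lra)).
  rewrite (iter_degree_one H Hd k x) in *. apply Rabs_le. lra.
Qed.

Lemma exists_INR_gt x : exists N : nat, x < INR N.
Proof. destruct (INR_unbounded x) as [N HN]. exists N. lra. Qed.

Section RotationNumber.
Variable H : R -> R.
Hypothesis Hn : nondecreasing H.
Hypothesis Hd : degree_one H.

Let a k := Nat.iter k H 0.
Let B := Rabs (a 1) + 1.

Lemma orbit_quasi_additive j k : Rabs (a (j + k) - a j - a k) <= 1.
Proof.
  unfold a. rewrite Nat.iter_add.
  pose proof (iter_displacement_oscillation H Hn Hd j (Nat.iter k H 0) 0).
  replace (Nat.iter j H (Nat.iter k H 0) - Nat.iter j H 0 - Nat.iter k H 0) with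
   ((Nat.iter j H (Nat.iter k H 0) - Nat.iter k H 0) - (Nat.iter j H 0 - 0)) by ring. auto.
Qed.

Lemma orbit_linear_bound k : Rabs (a k) <= INR k * B.
Proof.
  induction k as [|k IH].
  - unfold a. simpl. rewrite Rabs_R0; lra.
  - pose proof (orbit_quasi_additive 1 k) as E. rewrite S_INR. replace (S k) with (1 + k)%nat by lia.
    apply Rabs_le_between in E. apply Rabs_le_between in IH.
    pose proof (proj1 (Rabs_le_between (a 1) _) (Rle_refl _)). apply Rabs_le. unfold B in *. lra.
Qed.

Lemma orbit_mult k m : Rabs (a (k * m) - INR k * a m) <= INR k.
Proof.
  induction k as [|k IH].
  - unfold a. simpl. rewrite Rmult_0_l, Rminus_0_r, Rabs_R0; lra.
  - replace (S k * m)%nat with (m + k * m)%nat by lia. pose proof (orbit_quasi_additive m (k * m)) as E.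
    rewrite S_INR. apply Rabs_le_between in E. apply Rabs_le_between in IH. apply Rabs_le. lra.
Qed.

(* Division with remainder [n = kq m + r] reduces [a n / n] to [a m / m] up to [O(1/m) + O(m/n)]. *)
Lemma orbit_average_estimate n m : (1 <= n)%nat -> (1 <= m)%nat ->
  Rabs (a n / INR n - a m / INR m) <= 1 / INR m + (1 + 2 * INR m * B) / INR n.
Proof.
  intros Hn1 Hm1. assert (Hm0 : m <> 0%nat) by lia.
  pose proof (Nat.div_mod n m Hm0) as Hdm. pose proof (Nat.mod_upper_bound n m Hm0) as Hr.
  set (kq := (n / m)%nat) in *. set (r := (n mod m)%nat) in *.
  assert (HA : Rabs (a n - a (kq * m) - a r) <= 1)
    by (replace n with (kq * m + r)%nat by lia; apply orbit_quasi_additive).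
  pose proof (orbit_mult kq m) as HBm. pose proof (orbit_linear_bound r) as Har.
  pose proof (orbit_linear_bound m) as Ham.
  assert (HN : INR n = INR m * INR kq + INR r) by (rewrite Hdm at 1; rewrite plus_INR, mult_INR; auto).
  assert (Hrm : INR r <= INR m) by (apply le_INR; lia).
  assert (Hm : 1 <= INR m) by (apply (le_INR 1); lia).
  assert (Hnn : 1 <= INR n) by (apply (le_INR 1); lia).
  pose proof (pos_INR r). pose proof (pos_INR kq).
  assert (HB : 0 < B) by (unfold B; pose proof (Rabs_pos (a 1)); lra).
  set (X := a n * INR m - a m * INR n).
  assert (HX : Rabs X <= INR m + INR n + 2 * INR m * INR m * B).
  { replace X with (INR m * (a n - a (kq * m) - a r) + INR m * (a (kq * m) - INR kq * a m)
                   + INR m * a r - a m * INR r) by (unfold X; rewrite HN; ring).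
    apply Rabs_le_between in HA. apply Rabs_le_between in HBm. apply Rabs_le_between in Har. apply Rabs_le_between in Ham.
    apply Rabs_le. split; nra. }
  replace (a n / INR n - a m / INR m) with (X / (INR n * INR m)) by (unfold X; field; lra).
  unfold Rdiv. rewrite Rabs_mult, Rabs_inv, Rabs_mult, (Rabs_right (INR n)), (Rabs_right (INR m)) by lra.
  apply (Rmult_le_reg_r (INR n * INR m)); [nra|].
  rewrite Rmult_assoc, Rinv_l, Rmult_1_r by nra.
  replace ((1 * / INR m + (1 + 2 * INR m * B) * / INR n) * (INR n * INR m))
    with (INR n + INR m + 2 * INR m * INR m * B) by (field; lra). lra.
Qed.

Lemma orbit_averages_cauchy : Cauchy_crit (fun k => a (S k) / INR (S k)).
Proof.
  assert (HB : 0 < B) by (unfold B; pose proof (Rabs_pos (a 1)); lra).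
  intros eps He.
  destruct (exists_INR_gt (4 / eps)) as [M HM]. set (m := S M).
  assert (Hm0 : 0 < INR m) by (unfold m; rewrite S_INR; pose proof (pos_INR M); lra).
  assert (Hm1 : 1 / INR m < eps / 4).
  { assert (4 < INR m * eps).
    { replace 4 with (4 / eps * eps) by (field; lra). apply Rmult_lt_compat_r; unfold m; rewrite ?S_INR; lra. }
    unfold Rdiv. rewrite Rmult_1_l. apply (Rmult_lt_reg_r (INR m)); [lra|]. rewrite Rinv_l by lra. nra. }
  destruct (exists_INR_gt (4 * (1 + 2 * INR m * B) / eps)) as [N HN].
  assert (Hk : forall k, (k >= N)%nat -> (1 + 2 * INR m * B) / INR (S k) < eps / 4).
  { intros k Hk. assert (INR N <= INR k) by (apply le_INR; lia). rewrite S_INR.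
    assert (0 < 1 + 2 * INR m * B) by nra. pose proof (pos_INR k).
    apply (Rmult_lt_reg_r (INR k + 1)); [lra|].
    unfold Rdiv. rewrite Rmult_assoc, Rinv_l, Rmult_1_r by lra.
    apply (Rmult_lt_reg_r (4 / eps)); [apply Rdiv_lt_0_compat; lra|].
    replace (eps * / 4 * (INR k + 1) * (4 / eps)) with (INR k + 1) by (field; lra).
    unfold Rdiv in HN. lra. }
  exists N. intros k1 k2 Hk1 Hk2. unfold R_dist.
  pose proof (orbit_average_estimate (S k1) m ltac:(lia) ltac:(unfold m; lia)).
  pose proof (orbit_average_estimate (S k2) m ltac:(lia) ltac:(unfold m; lia)).
  pose proof (Hk k1 Hk1). pose proof (Hk k2 Hk2).
  replace (a (S k1) / INR (S k1) - a (S k2) / INR (S k2)) with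
    ((a (S k1) / INR (S k1) - a m / INR m) - (a (S k2) / INR (S k2) - a m / INR m)) by ring.
  eapply Rle_lt_trans; [apply Rabs_triang|]. rewrite Rabs_Ropp. lra.
Qed.

Lemma rotation_number_exists : exists r, rotation_number H r.
Proof.
  set (u := fun k => a (S k) / INR (S k)).
  destruct (Rcomplete.R_complete u orbit_averages_cauchy) as [l Hl]. exists l.
  intros x eps He.
  destruct (Hl (eps / 2) ltac:(lra)) as [N1 HN1].
  destruct (exists_INR_gt (2 * (Rabs x + 1) / eps)) as [N2 HN2].
  exists (S (N1 + N2)). intros [|k] Hk; [lia|].
  specialize (HN1 k ltac:(lia)). unfold R_dist, u in *.
  pose proof (iter_displacement_oscillation H Hn Hd (S k) x 0) as Ho. fold (a (S k)) in Ho.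
  assert (Hpos : 0 < INR (S k)) by (apply lt_0_INR; lia).
  assert (HN2' : INR N2 <= INR (S k)) by (apply le_INR; lia).
  assert (Hb : Rabs (Nat.iter (S k) H x - a (S k)) <= Rabs x + 1).
  { replace (Nat.iter (S k) H x - a (S k)) with ((Nat.iter (S k) H x - x - (a (S k) - 0)) + x) by ring.
    eapply Rle_trans; [apply Rabs_triang|]. lra. }
  replace (Nat.iter (S k) H x / INR (S k) - l) with
    ((Nat.iter (S k) H x - a (S k)) / INR (S k) + (a (S k) / INR (S k) - l)) by (field; lra).
  eapply Rle_lt_trans; [apply Rabs_triang|].
  enough (Rabs ((Nat.iter (S k) H x - a (S k)) / INR (S k)) < eps / 2) by lra.
  unfold Rdiv. rewrite Rabs_mult, Rabs_inv, (Rabs_right (INR (S k))) by lra.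
  apply (Rmult_lt_reg_r (INR (S k))); auto. rewrite Rmult_assoc, Rinv_l, Rmult_1_r by lra.
  enough (2 * (Rabs x + 1) < eps * INR (S k)) by lra.
  apply (Rmult_lt_reg_r (/ eps)); [apply Rinv_0_lt_compat; lra|].
  replace (eps * INR (S k) * / eps) with (INR (S k)) by (field; lra). unfold Rdiv in HN2. lra.
Qed.

Lemma iter_mult_le q (p : Z) x0 : Nat.iter q H x0 <= x0 + IZR p ->
  forall k, Nat.iter (q * k) H x0 <= x0 + INR k * IZR p.
Proof.
  intros Hq k. induction k as [|k IH].
  - rewrite Nat.mul_0_r. simpl. lra.
  - rewrite Nat.mul_succ_r, Nat.add_comm, Nat.iter_add, S_INR.
    pose proof (iter_nondecreasing H Hn q _ _ IH) as E.
    rewrite INR_IZR_INZ, <- mult_IZR, (degree_one_IZR _ (iter_degree_one H Hd q)),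
      mult_IZR, <- INR_IZR_INZ in E. lra.
Qed.

Lemma iter_mult_ge q (p : Z) x0 : x0 + IZR p <= Nat.iter q H x0 ->
  forall k, x0 + INR k * IZR p <= Nat.iter (q * k) H x0.
Proof.
  intros Hq k. induction k as [|k IH].
  - rewrite Nat.mul_0_r. simpl. lra.
  - rewrite Nat.mul_succ_r, Nat.add_comm, Nat.iter_add, S_INR.
    pose proof (iter_nondecreasing H Hn q _ _ IH) as E.
    rewrite INR_IZR_INZ, <- mult_IZR, (degree_one_IZR _ (iter_degree_one H Hd q)),
      mult_IZR, <- INR_IZR_INZ in E. lra.
Qed.

End RotationNumber.

Section RotationBounds.
Variables (H : R -> R) (r : R) (q : nat) (p : Z) (x0 : R).
Hypothesis Hn : nondecreasing H.
Hypothesis Hd : degree_one H.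
Hypothesis Hr : rotation_number H r.
Hypothesis Hq : (1 <= q)%nat.

Let phi k := (q * S k)%nat.

Lemma phi_pos k : 0 < INR (phi k).
Proof. apply lt_0_INR. unfold phi. lia. Qed.

Lemma rotation_number_along_multiples :
  is_lim_seq (fun k => Nat.iter (phi k) H x0 / INR (phi k)) r.
Proof.
  apply (is_lim_seq_subseq (fun k => Nat.iter k H x0 / INR k)); [|apply is_lim_seq_Reals, Hr].
  apply eventually_subseq. intro k. unfold phi. lia.
Qed.

Lemma affine_along_multiples :
  is_lim_seq (fun k => x0 / INR (phi k) + IZR p / INR q) (IZR p / INR q).
Proof.
  assert (Hinv : is_lim_seq (fun k => / INR (phi k)) 0).
  { apply (is_lim_seq_subseq (fun k => / INR k)).
    - apply eventually_subseq. intro k. unfold phi. lia.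
    - replace (Finite 0) with (Rbar_inv p_infty) by reflexivity.
      apply is_lim_seq_inv; [apply is_lim_seq_INR|discriminate]. }
  pose proof (is_lim_seq_plus' _ _ (x0 * 0) (IZR p / INR q)
    (is_lim_seq_scal_l _ x0 0 Hinv) (is_lim_seq_const (IZR p / INR q))) as E.
  rewrite Rmult_0_r, Rplus_0_l in E. exact E.
Qed.

Lemma multiple_split k : (x0 + INR (S k) * IZR p) / INR (phi k) = x0 / INR (phi k) + IZR p / INR q.
Proof.
  assert (0 < INR q) by (apply lt_0_INR; lia). pose proof (lt_0_INR (S k) ltac:(lia)).
  unfold phi. rewrite mult_INR. field. lra.
Qed.

Lemma rotation_number_le_of_iter_le : Nat.iter q H x0 <= x0 + IZR p -> r <= IZR p / INR q.
Proof.
  intro Hit.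
  refine (is_lim_seq_le _ _ r (IZR p / INR q) _ rotation_number_along_multiples affine_along_multiples).
  intro k. rewrite <- multiple_split. apply Rmult_le_compat_r; [left; apply Rinv_0_lt_compat, phi_pos|].
  apply (iter_mult_le H Hn Hd q p x0 Hit).
Qed.

Lemma rotation_number_ge_of_iter_ge : x0 + IZR p <= Nat.iter q H x0 -> IZR p / INR q <= r.
Proof.
  intro Hit.
  refine (is_lim_seq_le _ _ (IZR p / INR q) r _ affine_along_multiples rotation_number_along_multiples).
  intro k. rewrite <- multiple_split. apply Rmult_le_compat_r; [left; apply Rinv_0_lt_compat, phi_pos|].
  apply (iter_mult_ge H Hn Hd q p x0 Hit).
Qed.

End RotationBounds.

Lemma rotation_number_monotone H1 H2 r1 r2 : nondecreasing H1 -> (forall x, H1 x <= H2 x) ->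
  rotation_number H1 r1 -> rotation_number H2 r2 -> r1 <= r2.
Proof.
  intros Hn Hle R1 R2.
  eapply Rle_cv_lim; [|apply (R1 0)|apply (R2 0)].
  intro k. apply Rmult_le_compat_r.
  - destruct k; [simpl; rewrite Rinv_0; lra|left; apply Rinv_0_lt_compat, lt_0_INR; lia].
  - clear R1 R2. induction k; simpl; [lra|].
    eapply Rle_trans; [apply Hn, IHk|apply Hle].
Qed.

Lemma iter_perturb_upper (K : R -> R) x0 : continuity K -> nondecreasing K ->
  forall j eps, 0 < eps -> exists eta, 0 < eta /\ forall H, (forall y, H y <= K y + eta) ->
    Nat.iter j H x0 <= Nat.iter j K x0 + eps.
Proof.
  intros Hc Hn j. induction j as [|j IH]; intros eps He.
  - exists 1. split; [lra|]. intros. simpl. lra.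
  - destruct (continuity_pt_eps K (Nat.iter j K x0) (Hc _) (eps / 2) ltac:(lra)) as [d [Hd Hdd]].
    destruct (IH (d / 2) ltac:(lra)) as [e1 [He1 Hj]].
    exists (Rmin e1 (eps / 2)). split; [apply Rmin_pos; lra|].
    pose proof (Rmin_l e1 (eps / 2)) as Hm1. pose proof (Rmin_r e1 (eps / 2)) as Hm2.
    intros H HH. simpl.
    assert (Hy : Nat.iter j H x0 <= Nat.iter j K x0 + d / 2) by (apply Hj; intro y; specialize (HH y); lra).
    specialize (HH (Nat.iter j H x0)).
    enough (K (Nat.iter j H x0) <= K (Nat.iter j K x0) + eps / 2) by lra.
    destruct (Rle_dec (Nat.iter j H x0) (Nat.iter j K x0)) as [Hle|Hgt].
    + pose proof (Hn _ _ Hle). lra.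
    + assert (Hab : Rabs (Nat.iter j H x0 - Nat.iter j K x0) < d) by (apply Rabs_def1; lra).
      specialize (Hdd _ Hab). apply Rabs_def2 in Hdd. lra.
Qed.

Lemma iter_perturb_lower (K : R -> R) x0 : continuity K -> nondecreasing K ->
  forall j eps, 0 < eps -> exists eta, 0 < eta /\ forall H, (forall y, K y - eta <= H y) ->
    Nat.iter j K x0 - eps <= Nat.iter j H x0.
Proof.
  intros Hc Hn j. induction j as [|j IH]; intros eps He.
  - exists 1. split; [lra|]. intros. simpl. lra.
  - destruct (continuity_pt_eps K (Nat.iter j K x0) (Hc _) (eps / 2) ltac:(lra)) as [d [Hd Hdd]].
    destruct (IH (d / 2) ltac:(lra)) as [e1 [He1 Hj]].
    exists (Rmin e1 (eps / 2)). split; [apply Rmin_pos; lra|].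
    pose proof (Rmin_l e1 (eps / 2)) as Hm1. pose proof (Rmin_r e1 (eps / 2)) as Hm2.
    intros H HH. simpl.
    assert (Hy : Nat.iter j K x0 - d / 2 <= Nat.iter j H x0) by (apply Hj; intro y; specialize (HH y); lra).
    specialize (HH (Nat.iter j H x0)).
    enough (K (Nat.iter j K x0) - eps / 2 <= K (Nat.iter j H x0)) by lra.
    destruct (Rle_dec (Nat.iter j K x0) (Nat.iter j H x0)) as [Hle|Hgt].
    + pose proof (Hn _ _ Hle). lra.
    + assert (Hab : Rabs (Nat.iter j H x0 - Nat.iter j K x0) < d) by (apply Rabs_def1; lra).
      specialize (Hdd _ Hab). apply Rabs_def2 in Hdd. lra.
Qed.

Lemma exists_rational_between r1 r2 : r1 < r2 ->
  exists (q : nat) (p : Z), (1 <= q)%nat /\ r1 < IZR p / INR q < r2.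
Proof.
  intro H. destruct (exists_INR_gt (1 / (r2 - r1))) as [Q HQ].
  exists (S Q), (up (r1 * INR (S Q))). split; [lia|].
  destruct (archimed (r1 * INR (S Q))) as [H1 H2].
  assert (Hq : 0 < INR (S Q)) by (apply lt_0_INR; lia).
  assert (HQ' : INR Q < INR (S Q)) by (apply lt_INR; lia).
  assert (1 < (r2 - r1) * INR (S Q)).
  { apply (Rmult_lt_reg_r (/ (r2 - r1))); [apply Rinv_0_lt_compat; lra|].
    replace ((r2 - r1) * INR (S Q) * / (r2 - r1)) with (INR (S Q)) by (field; lra). unfold Rdiv in HQ. lra. }
  split; apply (Rmult_lt_reg_r (INR (S Q))); auto;
    unfold Rdiv; rewrite Rmult_assoc, Rinv_l, Rmult_1_r by lra; lra.
Qed.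

(* A rational [p/q] strictly between separates the orbits at time [q], which is an open condition. *)
Lemma rotation_number_lt_stable K rK r : continuity K -> nondecreasing K -> degree_one K ->
  rotation_number K rK -> rK < r ->
  exists eta, 0 < eta /\ forall H rH, nondecreasing H -> degree_one H ->
    (forall y, H y <= K y + eta) -> rotation_number H rH -> rH < r.
Proof.
  intros Kc Kn Kd HrK Hlt.
  destruct (exists_rational_between rK r Hlt) as [q [p [Hq [Hp1 Hp2]]]].
  assert (Hit : Nat.iter q K 0 < 0 + IZR p).
  { apply Rnot_le_lt. intro Hge. pose proof (rotation_number_ge_of_iter_ge K rK q p 0 Kn Kd HrK Hq Hge). lra. }
  destruct (iter_perturb_upper K 0 Kc Kn q ((0 + IZR p - Nat.iter q K 0) / 2) ltac:(lra))
    as [eta [Heta Hpert]].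
  exists eta. split; [exact Heta|]. intros H rH Hn Hd HH HrH.
  enough (rH <= IZR p / INR q) by lra.
  apply (rotation_number_le_of_iter_le H rH q p 0 Hn Hd HrH Hq).
  pose proof (Hpert H HH). lra.
Qed.

Lemma rotation_number_gt_stable K rK r : continuity K -> nondecreasing K -> degree_one K ->
  rotation_number K rK -> r < rK ->
  exists eta, 0 < eta /\ forall H rH, nondecreasing H -> degree_one H ->
    (forall y, K y - eta <= H y) -> rotation_number H rH -> r < rH.
Proof.
  intros Kc Kn Kd HrK Hlt.
  destruct (exists_rational_between r rK Hlt) as [q [p [Hq [Hp1 Hp2]]]].
  assert (Hit : 0 + IZR p < Nat.iter q K 0).
  { apply Rnot_le_lt. intro Hge. pose proof (rotation_number_le_of_iter_le K rK q p 0 Kn Kd HrK Hq Hge). lra. }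
  destruct (iter_perturb_lower K 0 Kc Kn q ((Nat.iter q K 0 - (0 + IZR p)) / 2) ltac:(lra))
    as [eta [Heta Hpert]].
  exists eta. split; [exact Heta|]. intros H rH Hn Hd HH HrH.
  enough (IZR p / INR q <= rH) by lra.
  apply (rotation_number_ge_of_iter_ge H rH q p 0 Hn Hd HrH Hq).
  pose proof (Hpert H HH). lra.
Qed.

Section Translates.
Variable G : R -> R.
Hypothesis Gc : continuity G.
Hypothesis Gn : nondecreasing G.
Hypothesis Gd : degree_one G.

Lemma translate_nondecreasing t : nondecreasing (fun x => G x + t).
Proof. intros x y H. pose proof (Gn x y H). lra. Qed.

Lemma translate_degree_one t : degree_one (fun x => G x + t).
Proof. intro x. rewrite Gd. ring. Qed.

Lemma translate_continuity t : continuity (fun x => G x + t).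
Proof. intro x. apply continuity_pt_plus; [apply Gc|apply continuity_pt_const; intros ? ?; reflexivity]. Qed.

Lemma translate_rotation_number_exists t : exists r, rotation_number (fun x => G x + t) r.
Proof. apply rotation_number_exists; [apply translate_nondecreasing|apply translate_degree_one]. Qed.

(* [t] is the supremum of the translations whose rotation number is at most [r]. *)
Lemma rotation_number_ivt lo hi r : lo <= hi ->
  (forall rr, rotation_number (fun x => G x + lo) rr -> rr <= r) ->
  (forall rr, rotation_number (fun x => G x + hi) rr -> r <= rr) ->
  exists t, lo <= t <= hi /\ rotation_number (fun x => G x + t) r.
Proof.
  intros Hlh Hlo Hhi.
  set (E := fun t => lo <= t <= hi /\ forall rr, rotation_number (fun x => G x + t) rr -> rr <= r).
  destruct (completeness E) as [ts [Hub Hlub]].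
  { exists hi. intros t [Ht _]. lra. }
  { exists lo. split; [lra|auto]. }
  assert (Hts : lo <= ts <= hi).
  { split; [apply Hub; split; [lra|auto]|apply Hlub; intros t [Ht _]; lra]. }
  exists ts. split; [exact Hts|].
  destruct (translate_rotation_number_exists ts) as [rs Hrs].
  destruct (Rtotal_order rs r) as [Hlt|[<-|Hgt]]; [exfalso| exact Hrs |exfalso].
  - assert (Hts2 : ts < hi).
    { destruct (Req_dec ts hi) as [->|]; [specialize (Hhi rs Hrs); lra|lra]. }
    destruct (rotation_number_lt_stable _ rs r (translate_continuity ts) (translate_nondecreasing ts)
      (translate_degree_one ts) Hrs Hlt) as [eta [Heta Hstab]].
    set (t' := Rmin (ts + eta) hi).
    assert (Ht' : ts < t' <= ts + eta /\ t' <= hi)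
      by (unfold t'; apply Rmin_case_strong; intros; lra).
    assert (E t').
    { split; [lra|]. intros rr Hrr. left.
      apply (Hstab _ rr (translate_nondecreasing t') (translate_degree_one t')); [intro; lra|exact Hrr]. }
    pose proof (Hub t' H). lra.
  - assert (Hts1 : lo < ts).
    { destruct (Req_dec ts lo) as [->|]; [specialize (Hlo rs Hrs); lra|lra]. }
    destruct (rotation_number_gt_stable _ rs r (translate_continuity ts) (translate_nondecreasing ts)
      (translate_degree_one ts) Hrs Hgt) as [eta [Heta Hstab]].
    assert (Hbig : ~ is_upper_bound E (ts - eta)) by (intro Hb; pose proof (Hlub _ Hb); lra).
    apply Hbig. intros e [He Hle]. apply Rnot_lt_le. intro Hlt'.
    destruct (Rle_dec e ts) as [Hets|]; [|pose proof (Hub e (conj He Hle)); lra].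
    destruct (translate_rotation_number_exists e) as [re Hre].
    pose proof (Hle re Hre).
    assert (r < re); [|lra].
    apply (Hstab _ re (translate_nondecreasing e) (translate_degree_one e)); [intro; lra|exact Hre].
Qed.

End Translates.

Lemma rotation_number_zero_of_fixed_point H : nondecreasing H -> degree_one H -> H 0 = 0 ->
  rotation_number H 0.
Proof.
  intros Hn Hd H0. destruct (rotation_number_exists H Hn Hd) as [r Hr].
  pose proof (rotation_number_le_of_iter_le H r 1 0 0 Hn Hd Hr (le_n 1)) as A1.
  pose proof (rotation_number_ge_of_iter_ge H r 1 0 0 Hn Hd Hr (le_n 1)) as A2.
  simpl in A1, A2. rewrite H0 in A1, A2. unfold Rdiv in A1, A2. rewrite Rmult_0_l in A1, A2.
  assert (Hr0 : r = 0) by (apply Rle_antisym; [apply A1|apply A2]; lra).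
  rewrite <- Hr0. exact Hr.
Qed.

(* When [F 0 = 0], [0] is a fixed point of both lifts and no intermediate value argument is needed. *)
Lemma rotation_preserving_translate F G c : nondecreasing F -> degree_one F -> normalized_lift F ->
  continuity G -> nondecreasing G -> degree_one G -> (forall x, Rabs (G x - F x) <= c) ->
  (0 < F 0 -> 2 * c < F 0 /\ 2 * c < 1 - F 0) ->
  exists t r, Rabs t <= c /\ normalized_lift (fun x => G x + t) /\
    rotation_number F r /\ rotation_number (fun x => G x + t) r.
Proof.
  intros Fn Fd [[HF0|HF0] HF1] Gc Gn Gd HGF Hsmall.
  - destruct (rotation_number_exists F Fn Fd) as [r Hr].
    assert (Hc : 0 <= c) by (pose proof (HGF 0); pose proof (Rabs_pos (G 0 - F 0)); lra).
    destruct (rotation_number_ivt G Gc Gn Gd (- c) c r) as [t [Ht Hrt]]; [lra| | |].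
    + intros rr Hrr. apply (rotation_number_monotone _ F rr r (translate_nondecreasing G Gn (- c))); auto.
      intro x. specialize (HGF x). apply Rabs_le_between in HGF. lra.
    + intros rr Hrr. apply (rotation_number_monotone F (fun x => G x + c) r rr Fn); auto.
      intro x. specialize (HGF x). apply Rabs_le_between in HGF. lra.
    + exists t, r. split; [apply Rabs_le; lra|]. split; [|auto].
      destruct (Hsmall HF0). specialize (HGF 0). apply Rabs_le_between in HGF. unfold normalized_lift. lra.
  - exists (- G 0), 0. split; [rewrite Rabs_Ropp; replace (G 0) with (G 0 - F 0) by lra; apply HGF|].
    split; [unfold normalized_lift; lra|]. split.
    + apply rotation_number_zero_of_fixed_point; auto.
    + apply rotation_number_zero_of_fixed_point;
        [apply translate_nondecreasing|apply translate_degree_one|]; auto. ring.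
Qed.

(** * Flattening perturbation *)

Lemma exists_small_scale M B th d : 0 < M -> 0 < B -> 0 < th -> 0 < d ->
  exists lam, 0 < lam /\ lam * M < th /\ lam * B < d.
Proof.
  intros HM HB Hth Hd. exists (Rmin (th / (2 * M)) (d / (2 * B))).
  pose proof (Rmin_l (th / (2 * M)) (d / (2 * B))). pose proof (Rmin_r (th / (2 * M)) (d / (2 * B))).
  assert (0 < th / (2 * M)) by (apply Rdiv_lt_0_compat; lra).
  assert (0 < d / (2 * B)) by (apply Rdiv_lt_0_compat; lra).
  split; [apply Rmin_pos; lra|split].
  - apply (Rle_lt_trans _ (th / (2 * M) * M)); [apply Rmult_le_compat_r; lra|].
    replace (th / (2 * M) * M) with (th / 2) by (field; lra). lra.
  - apply (Rle_lt_trans _ (d / (2 * B) * B)); [apply Rmult_le_compat_r; lra|].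
    replace (d / (2 * B) * B) with (d / 2) by (field; lra). lra.
Qed.

Lemma not_in_arc_translates a b p q x : b - a < 1 -> a < p -> q < b -> a < x < b ->
  x <= p \/ q <= x -> forall k : Z, ~ p < x + IZR k < q.
Proof.
  intros Hshort Hap Hqb Hx Hgap k Hk. destruct Hgap as [Hxp|Hqx].
  - apply (no_IZR_strictly_between 0 k). simpl IZR. lra.
  - apply (no_IZR_strictly_between (-1) k). simpl IZR. lra.
Qed.

Section Flattening.
Variables (N : nat) (F : R -> R) (DF : nat -> R -> R).
Hypothesis HF : Cn_with (S N) F DF.
Hypothesis Fn : nondecreasing F.
Hypothesis Fd : degree_one F.

Lemma DF1_nonneg x : 0 <= DF 1%nat x.
Proof. apply (derive_nonneg_of_nondecreasing F); [apply (Cn_with_derive1 N), HF|exact Fn]. Qed.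

Lemma DF1_periodic x : DF 1%nat (x + 1) = DF 1%nat x.
Proof. apply (Cn_with_periodic (S N) F DF 1); auto. lia. Qed.

Lemma DF1_pos_somewhere : exists x1, 0 < DF 1%nat x1.
Proof.
  apply NNPP. intro Hno.
  assert (Hz : forall x, DF 1%nat x = 0).
  { intro x. destruct (DF1_nonneg x) as [Hp|Hp]; auto. exfalso. apply Hno. exists x; auto. }
  pose proof (const_of_derive_zero F (DF 1%nat) 0 1 (Cn_with_derive1 N F DF HF) (fun x _ => Hz x) 1).
  pose proof (Fd 0). rewrite Rplus_0_l in *. lra.
Qed.

Lemma flat_interval_short a b : a < b -> (forall x, a < x < b -> DF 1%nat x = 0) -> b - a < 1.
Proof.
  intros Hab Hflat. apply Rnot_le_lt. intro Hlong.
  pose proof (const_of_derive_zero F (DF 1%nat) a b (Cn_with_derive1 N F DF HF) Hflat (a + 1)).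
  rewrite Fd in *. lra.
Qed.

Lemma compensating_staircase : exists kap Sc DSc, 0 < kap /\ Cn_with (S N) Sc DSc /\
  (forall x, Sc (x + 1) = Sc x + 1) /\ (forall x, 0 <= DSc 1%nat x) /\
  (forall x, 0 < DSc 1%nat x -> kap < DF 1%nat x).
Proof.
  destruct DF1_pos_somewhere as [x1 Hx1].
  assert (DF1c : continuity (DF 1%nat)) by (apply (Cn_with_continuity _ _ _ HF); lia).
  destruct (continuity_pt_eps (DF 1%nat) x1 (DF1c x1) (DF 1%nat x1 / 2)) as [r0 [Hr0 Hr0x]]; [lra|].
  pose proof (Rmin_l r0 (1/2)). pose proof (Rmin_r r0 (1/2)).
  assert (0 < Rmin r0 (1/2)) by (apply Rmin_pos; lra).
  set (w := Rmin r0 (1/2)) in *.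
  destruct (arc_staircase N (x1 - w / 2) (x1 + w / 2)) as [Sc [DSc [HSc [Scd [DSc1 Hsupp]]]]]; [lra|].
  exists (DF 1%nat x1 / 2), Sc, DSc. split; [lra|split; [auto|split; [auto|split; [auto|]]]].
  intros x Hx. destruct (proj1 (Hsupp x) Hx) as [k Hk].
  rewrite <- (periodic_IZR (DF 1%nat) DF1_periodic k x).
  assert (Hnear : Rabs (x + IZR k - x1) < r0) by (apply Rabs_def1; lra).
  specialize (Hr0x _ Hnear). apply Rabs_def2 in Hr0x. lra.
Qed.

Section Perturbation.
Variables (Sg Sc : R -> R) (DSg DSc : nat -> R -> R) (kap lam delta : R).
Hypothesis HSg : Cn_with (S N) Sg DSg.
Hypothesis HSc : Cn_with (S N) Sc DSc.
Hypothesis DSg1_nonneg : forall x, 0 <= DSg 1%nat x.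
Hypothesis DSc1_nonneg : forall x, 0 <= DSc 1%nat x.
Hypothesis DSc1_support : forall x, 0 < DSc 1%nat x -> kap < DF 1%nat x.
Hypothesis Hkap : 0 < kap.
Hypothesis Hlam : 0 < lam.
Hypothesis Hdelta : 0 < delta < 1.
Hypothesis DSc1_small : forall x, lam * DSc 1%nat x < delta * kap.

Let G x := F x + lam * (Sg x + -1 * Sc x).
Let DG m x := DF m x + lam * (DSg m x + -1 * DSc m x).

Lemma perturbation_Cn_with : Cn_with (S N) G DG.
Proof. apply Cn_with_lincomb; [exact HF|apply Cn_with_lincomb; assumption]. Qed.

(* Where the compensating term acts, [DF 1 > kap > lam * DSc 1]. *)
Lemma perturbation_derive1_nonneg x : 0 <= DG 1%nat x.
Proof.
  unfold DG. pose proof (DSg1_nonneg x). pose proof (DF1_nonneg x). pose proof (DSc1_small x).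
  destruct (DSc1_nonneg x) as [Hp|Hp]; [|rewrite <- Hp; nra].
  pose proof (DSc1_support x Hp). assert (delta * kap <= kap) by nra. nra.
Qed.

Lemma perturbation_nondecreasing : nondecreasing G.
Proof.
  apply (nondecreasing_of_derive_nonneg G (DG 1%nat)); [|exact perturbation_derive1_nonneg].
  apply (Cn_with_derive1 N), perturbation_Cn_with.
Qed.

Lemma perturbation_relative_close x : DSg 1%nat x = 0 ->
  Rabs (DG 1%nat x - DF 1%nat x) < delta * DF 1%nat x \/ (DF 1%nat x = 0 /\ DG 1%nat x = 0).
Proof.
  intro Hg. unfold DG. rewrite Hg.
  replace (DF 1%nat x + lam * (0 + -1 * DSc 1%nat x) - DF 1%nat x) with (- (lam * DSc 1%nat x)) by ring.
  rewrite Rabs_Ropp. pose proof (DSc1_small x).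
  destruct (DSc1_nonneg x) as [Hp|Hp].
  - left. pose proof (DSc1_support x Hp). rewrite Rabs_right by nra. nra.
  - rewrite <- Hp, Rmult_0_r, Rabs_R0. destruct (DF1_nonneg x) as [Hd|Hd]; [left; nra|right].
    split; [auto|rewrite <- Hd; ring].
Qed.

Lemma perturbation_on_flat_interval a b : (forall x, a < x < b -> DF 1%nat x = 0) ->
  forall m x, (1 <= m <= S N)%nat -> a < x < b -> DG m x = lam * DSg m x.
Proof.
  intros Hflat m x Hm Hx. unfold DG.
  rewrite (Cn_with_zero_on_interval _ F DF a b HF Hflat m x Hm Hx).
  rewrite (Cn_with_zero_on_interval _ Sc DSc a b HSc) with (m := m); auto; [ring|].
  intros y Hy. destruct (DSc1_nonneg y) as [Hp|Hp]; [|auto].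
  pose proof (DSc1_support y Hp). rewrite Hflat in *; auto. nra.
Qed.

End Perturbation.

Lemma flattening_perturbation a b p q delta th :
  a < p -> p < q -> q < b -> (forall x, a < x < b -> DF 1%nat x = 0) -> 0 < delta < 1 -> 0 < th ->
  exists G DG c, Cn_with (S N) G DG /\ nondecreasing G /\ degree_one G /\ 0 <= c < th /\
    (forall i x, (i <= S N)%nat -> Rabs (DG i x - DF i x) <= c) /\
    (forall x, (forall k : Z, ~ p < x + IZR k < q) ->
       Rabs (DG 1%nat x - DF 1%nat x) < delta * DF 1%nat x \/ (DF 1%nat x = 0 /\ DG 1%nat x = 0)) /\
    (forall x, a < x < b ->
       ((forall m, (1 <= m <= S N)%nat -> DG m x = 0) <-> (a < x <= p \/ q <= x < b))).
Proof.
  intros Hap Hpq Hqb Hflat Hdelta Hth.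
  pose proof (flat_interval_short a b ltac:(lra) Hflat) as Hshort.
  destruct (arc_staircase N p q) as [Sg [DSg [HSg [Sgd [DSg1 Hsupp]]]]]; [lra|].
  destruct compensating_staircase as [kap [Sc [DSc [Hkap [HSc [Scd [DSc1 DSc1_support]]]]]]].
  destruct (Cn_with_periodic_bounded _ _ _ (Cn_with_lincomb _ _ _ _ _ (-1) HSg HSc)) as [M [HM HMb]].
  { intro x. rewrite Sgd, Scd. ring. }
  destruct (periodic_bounded (DSc 1%nat)) as [B [HB HBb]].
  { apply (Cn_with_continuity _ _ _ HSc). lia. }
  { intro x. apply (Cn_with_periodic _ _ _ 1 HSc Scd). lia. }
  destruct (exists_small_scale M B th (delta * kap)) as [lam [Hlam [HlamM HlamB]]]; auto; [nra|].
  assert (DSc1_small : forall x, lam * DSc 1%nat x < delta * kap).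
  { intro x. specialize (HBb x). rewrite Rabs_right in HBb by (apply Rle_ge, DSc1). nra. }
  exists (fun x => F x + lam * (Sg x + -1 * Sc x)), (fun m x => DF m x + lam * (DSg m x + -1 * DSc m x)), (lam * M).
  split; [apply perturbation_Cn_with; auto|].
  split; [apply perturbation_nondecreasing with (DSg := DSg) (DSc := DSc) (kap := kap) (delta := delta); auto|].
  split; [intro x; rewrite Fd, Sgd, Scd; ring|].
  split; [nra|].
  split; [|split].
  - intros i x Hi. replace (DF i x + lam * (DSg i x + -1 * DSc i x) - DF i x)
      with (lam * (DSg i x + -1 * DSc i x)) by ring.
    rewrite Rabs_mult, Rabs_right by lra. apply Rmult_le_compat_l; [lra|auto].
  - intros x Hx. apply perturbation_relative_close with (kap := kap); auto.
    destruct (DSg1 x) as [Hp|]; [|auto]. exfalso. destruct (proj1 (Hsupp x) Hp) as [k Hk]. exact (Hx k Hk).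
  - intros x Hx.
    assert (HDG : forall m, (1 <= m <= S N)%nat ->
      DF m x + lam * (DSg m x + -1 * DSc m x) = lam * DSg m x)
      by (intros m Hm; apply perturbation_on_flat_interval with (Sc := Sc) (kap := kap) (a := a) (b := b); auto).
    split.
    + intro Hzero. pose proof (Hzero 1%nat ltac:(lia)) as H1. rewrite HDG in H1 by lia.
      destruct (Rle_lt_dec x p); [lra|]. destruct (Rle_lt_dec q x); [lra|].
      assert (0 < DSg 1%nat x) by (apply Hsupp; exists 0%Z; rewrite Rplus_0_r; lra). nra.
    + intros Hgap m Hm. rewrite HDG by exact Hm.
      rewrite (Cn_with_zero_off_arc (S N) Sg DSg 1 p q); [ring|lra|auto|auto| |auto|].
      * intros y Hy. apply Hsupp. destruct (DSg1 y); [auto|congruence].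
      * apply (not_in_arc_translates a b); auto; lra.
Qed.

End Flattening.

Lemma flat_set_gap n a b eps : 0 < eps < 1/4 -> a < b -> b - a > 2 * eps / 2 ^ n ->
  exists p q, a < p /\ p < q /\ q < b /\
    forall x, flat_set n a b eps x <-> (a < x <= p \/ q <= x < b).
Proof.
  intros Heps Hab Hba.
  assert (H2 : 1 <= 2 ^ n) by (apply pow_R1_Rle; lra).
  set (e := eps / 2 ^ n).
  assert (He : 0 < e) by (unfold e; apply Rdiv_lt_0_compat; lra).
  assert (E2 : 2 * eps / 2 ^ n = 2 * e) by (unfold e; field; lra).
  rewrite E2 in Hba. unfold flat_set. rewrite E2. fold e.
  destruct (Nat.even n).
  - exists (b - 2 * e), (b - e). repeat split; try lra; intros; lra.
  - exists (a + e), (a + 2 * e). repeat split; try lra; intros; lra.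
Qed.

Lemma normalization_margin F delta : normalized_lift F -> 0 < delta ->
  exists th, 0 < th /\ 2 * th <= delta /\ (0 < F 0 -> 2 * th <= F 0 /\ 2 * th <= 1 - F 0).
Proof.
  intros [HF0 HF1] Hdelta. destruct (Rlt_le_dec 0 (F 0)) as [Hpos|Hzero].
  - exists (Rmin delta (Rmin (F 0) (1 - F 0)) / 2).
    pose proof (Rmin_l delta (Rmin (F 0) (1 - F 0))). pose proof (Rmin_r delta (Rmin (F 0) (1 - F 0))).
    pose proof (Rmin_l (F 0) (1 - F 0)). pose proof (Rmin_r (F 0) (1 - F 0)).
    assert (0 < Rmin delta (Rmin (F 0) (1 - F 0))) by (repeat apply Rmin_pos; lra).
    split; [lra|split; [lra|intros _; lra]].
  - exists (delta / 2). split; [lra|split; [lra|intro; lra]].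
Qed.

Theorem lemma2p2 (n : nat) (F : R -> R) (DF : nat -> R -> R) (a b : R) :
  (1 <= n)%nat ->
  Cn_with n F DF -> nondecreasing F -> degree_one F -> normalized_lift F ->
  a < b ->
  (forall (m : nat) (x : R), (1 <= m <= n)%nat -> a < x < b -> DF m x = 0) ->
  forall eps delta : R,
    0 < eps < 1/4 -> 0 < delta < 1 -> b - a > 2 * eps / 2 ^ n ->
    exists (Ft : R -> R) (DFt : nat -> R -> R),
      Cn_with n Ft DFt /\ nondecreasing Ft /\ degree_one Ft /\ normalized_lift Ft /\
      (exists c, c < delta /\
         forall (i : nat) (x : R), (i <= n)%nat -> Rabs (DFt i x - DF i x) <= c) /\
      (exists r, rotation_number F r /\ rotation_number Ft r) /\
      (forall x : R,
         (forall k : Z, ~ (a - (b - a) / 4 < x + IZR k < b + (b - a) / 4)) ->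
         Rabs (DFt 1%nat x - DF 1%nat x) < delta * DF 1%nat x \/
         (DF 1%nat x = 0 /\ DFt 1%nat x = 0)) /\
      (forall x : R, a < x < b ->
         ((forall m : nat, (1 <= m <= n)%nat -> DFt m x = 0) <-> flat_set n a b eps x)).
Proof.
  intros Hn HF Fn Fd Fnorm Hab Hflat eps delta Heps Hdelta Hba.
  destruct n as [|N]; [lia|].
  destruct (flat_set_gap (S N) a b eps Heps Hab Hba) as [p [q [Hap [Hpq [Hqb Hgap]]]]].
  destruct (normalization_margin F delta Fnorm) as [th [Hth [Hthd Hth0]]]; [lra|].
  destruct (flattening_perturbation N F DF HF Fn Fd a b p q delta th)
    as (G & DG & c & HG & Gn & Gd & Hc & HGF & Hrel & Hzero); auto.
  destruct (rotation_preserving_translate F G c) as (t & r & Ht & Gnorm & HrF & HrG); auto.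
  - rewrite <- (Cn_with_D0 _ _ _ HG). apply (Cn_with_continuity _ _ _ HG). lia.
  - intro x. rewrite <- (Cn_with_D0 _ _ _ HG), <- (Cn_with_D0 _ _ _ HF). apply HGF. lia.
  - intro HF0. destruct (Hth0 HF0). lra.
  - exists (fun x => G x + t), (fun m x => DG m x + (if Nat.eqb m 0 then t else 0)).
    split; [apply Cn_with_add_const, HG|].
    split; [apply translate_nondecreasing, Gn|].
    split; [apply translate_degree_one, Gd|].
    split; [exact Gnorm|].
    split; [|split; [exists r; auto|split]].
    + exists (2 * c). split; [lra|]. intros i x Hi. specialize (HGF i x Hi).
      replace (DG i x + (if (i =? 0)%nat then t else 0) - DF i x)
        with ((DG i x - DF i x) + (if (i =? 0)%nat then t else 0)) by ring.
      eapply Rle_trans; [apply Rabs_triang|].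
      destruct (i =? 0)%nat; [lra|rewrite Rabs_R0; lra].
    + intros x Hx. simpl. rewrite Rplus_0_r. apply Hrel. intros k Hk. apply (Hx k). lra.
    + intros x Hx. rewrite Hgap, <- (Hzero x Hx).
      split; intros H m Hm; specialize (H m Hm); destruct m as [|m]; [lia| |lia|]; simpl in *; lra.
Qed.
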